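(* Let $E$ be a real topological vector space, $\Omega$ a nonempty open subset of $E$, and $f_0,\dots,f_m:\Omega\to\mathbb{R}$. Let $\hat{x}$ be a solution of the problem $(\mathcal{P}_1)$: maximize $f_0(x)$ subject to $x\in\Omega$ and $f_i(x)\ge0$ for all $i\in\{1,\dots,m\}$. Assume that $f_j$ is lower semicontinuous at $\hat{x}$ for every $j\in\{1,\dots,m\}$ with $f_j(\hat{x})>0$, that each $f_i$ ($0\le i\le m$) is $D^-_M$-differentiable at $\hat{x}$, and that, after reindexing, $\{i\in\{1,\dots,m\}:f_i(\hat{x})=0\}=\{1,\dots,l\}$ with $l\ge1$. For $p\in\{0,\dots,l\}$ let $A_p=\{u\in E: D^-_Mf_i(\hat{x})(u)>0\ \text{for all } i\in\{p,\dots,l\}\}$, assume $A_l\ne\emptyset$, and let $k:=\min\{i\in\{0,\dots,l\}:A_i\neq\emptyset\}$ (so that $k\ge1$). Then for every $v\in E$ with $D^-_Mf_i(\hat{x})(v)\ge0$ for all $i\in\{k,\dots,l\}$, one has $D^-_Mf_{k-1}(\hat{x})(v)\le0$.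
   Context: $D^-f(x)(u):=\liminf_{t\to0^+}\frac{f(x+tu)-f(x)}{t}$ (with $D^-f(x)(0)=0$); $D^-_Mf(x)(u):=\inf_{w\in E}\{D^-f(x)(u+w)-D^-f(x)(w)\}$; $f$ is $D^-_M$-differentiable at $x$ if both are finite for every $u\in E$. *)

From HB Require Import structures.
From mathcomp Require Import all_boot all_order all_algebra.
From mathcomp Require Import all_classical all_reals all_analysis.
Set Implicit Arguments. Unset Strict Implicit. Unset Printing Implicit Defensive.
Import Order.TTheory GRing.Theory Num.Theory.
Import numFieldTopology.Exports.
Local Open Scope classical_set_scope.
Local Open Scope ring_scope.

Definition Dminus {R : realType} {E : topologicalLmodType R}
  (f : E -> R) (x u : E) : \bar R :=
  if u == 0 then 0%E
  else limf_einf (fun t : R => ((f (x + t *: u) - f x) / t)%:E) (0^'+).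

Definition DMminus {R : realType} {E : topologicalLmodType R}
  (f : E -> R) (x u : E) : \bar R :=
  ereal_inf [set (Dminus f x (u + w)%R - Dminus f x w)%E | w in [set: E]].

Definition DM_differentiable {R : realType} {E : topologicalLmodType R}
  (f : E -> R) (x : E) : Prop :=
  forall u : E, Dminus f x u \is a fin_num /\ DMminus f x u \is a fin_num.

Definition lsc_at {R : realType} {E : topologicalType} (f : E -> R) (x : E) : Prop :=
  forall e : R, 0 < e -> \forall y \near x, f x - e < f y.

Definition is_solution_P1 {R : realType} {E : topologicalLmodType R}
  (Omega : set E) (m : nat) (f : nat -> E -> R) (xh : E) : Prop :=
  Omega xh /\ (forall i, (1 <= i <= m)%N -> 0 <= f i xh) /\
  forall x, Omega x -> (forall i, (1 <= i <= m)%N -> 0 <= f i x) -> f 0%N x <= f 0%N xh.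

Definition Aset {R : realType} {E : topologicalLmodType R}
  (f : nat -> E -> R) (xh : E) (l p : nat) : set E :=
  [set u | forall i, (p <= i <= l)%N -> (0 < DMminus (f i) xh u)%E].

From HB Require Import structures.
From mathcomp Require Import all_boot all_order all_algebra.
From mathcomp Require Import all_classical all_reals all_analysis.
Import Order.TTheory GRing.Theory Num.Theory.
Import numFieldTopology.Exports.
Local Open Scope classical_set_scope.
Local Open Scope ring_scope.

(** If [k] were [0], a direction [u] of [A_0] would raise [f_0] and every
    active constraint to first order ([D^-_M <= D^-]), while the inactive
    constraints stay positive near [xh] by lower semicontinuity, so
    [xh + t u] would beat [xh] for small [t > 0].  For the second claim,
    [D^-_M f(xh)] is superadditive once [D^- f(xh)] is finite; hence if
    [D^-_M f_(k-1)(xh)(v) > 0], then [n v + u] lies in [A_(k-1)] for any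
    [u] in [A_k] and [n] large, contradicting the minimality of [k]. *)

Lemma near_forall_leq (T : Type) (F : set_system T) (P : nat -> T -> Prop) n :
  Filter F -> (forall i, (i <= n)%N -> \forall t \near F, P i t) ->
  \forall t \near F, forall i, (i <= n)%N -> P i t.
Proof.
move=> FF FP.
have := @filter_forall _ 'I_n.+1 (fun i => P i) F FF (fun i => FP i (ltn_ord i)).
by apply: filterS => t Pt i le_in; exact: (Pt (Ordinal (le_in : (i < n.+1)%N))).
Qed.

Lemma exists_natmulD_gt0 (R : archiRealFieldType) (a b : R) :
  0 < a -> exists n, 0 < a *+ n + b.
Proof.
move=> a_gt0; exists (Num.Def.archi_bound (`|b| / a)).
have /archi_boundP : 0 <= `|b| / a by rewrite divr_ge0 // ltW.
rewrite ltr_pdivrMr // mulr_natl => /ltr_leD/(_ (lerNnormlW (lexx `|b|))).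
by rewrite subrr.
Qed.

Lemma continuous_line (R : numFieldType) (E : topologicalLmodType R) (x u : E) :
  continuous (fun t : R => x + t *: u).
Proof.
move=> t.
have scale_u : {for t, continuous (fun s : R => s *: u)}.
  apply: (@continuous_comp _ _ _ (fun s : R => ((s : R^o), u))
    (fun z : R^o * E => z.1 *: z.2) t); last exact: scale_continuous.
  exact: (@cvg_pair _ _ _ _ (nbhs (t : R^o)) (nbhs u) _ _ _ _ _ cvg_id (cvg_cst _)).
apply: (@continuous_comp _ _ _ (fun s : R => (x, s *: u))
  (fun z : E * E => z.1 + z.2) t); last exact: add_continuous.
exact: (@cvg_pair _ _ _ _ (nbhs x) (nbhs (t *: u)) _ _ _ _ _ (cvg_cst _) scale_u).
Qed.

Lemma near_line_right {R : numFieldType} {E : topologicalLmodType R} (x u : E)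
    (P : E -> Prop) :
  (\forall y \near x, P y) -> \forall t \near 0^'+, P (x + t *: u).
Proof.
move=> Px; apply: cvg_within; apply: continuous_line.
by rewrite scale0r addr0.
Qed.

Section LowerDiniDerivative.
Context {R : realType} {E : topologicalLmodType R} {f : E -> R} {x : E}.

Lemma DMminus_le_Dminus u : (DMminus f x u <= Dminus f x u)%E.
Proof.
apply: ereal_inf_lbound; exists 0 => //.
by rewrite addr0 /Dminus eqxx sube0.
Qed.

Lemma Dminus_gt0_near u : (0 < Dminus f x u)%E ->
  \forall t \near 0^'+, f x < f (x + t *: u).
Proof.
rewrite /Dminus; case: eqP => [_|_]; first by rewrite ltxx.
rewrite limf_einfE => /ereal_sup_gt[_ [V FV <-]] /lt_le_trans quot_gt0.
near=> t.
have : (0 < ((f (x + t *: u) - f x) / t)%:E)%E.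
  by apply: quot_gt0; apply: ereal_inf_lbound; exists t => //; near: t.
have t_gt0 : 0 < t by near: t; exact: nbhs_right_gt.
by rewrite lte_fin pmulr_lgt0 ?invr_gt0 // subr_gt0.
Unshelve. all: by end_near.
Qed.

Hypothesis DMdiff : DM_differentiable f x.

Lemma DMminus_superadditive a b :
  (DMminus f x a + DMminus f x b <= DMminus f x (a + b)%R)%E.
Proof.
apply: le_ereal_inf_tmp => _ [w _ <-].
have DMa : (DMminus f x a <= Dminus f x (a + (b + w))%R - Dminus f x (b + w)%R)%E.
  by apply: ereal_inf_lbound; exists (b + w).
have DMb : (DMminus f x b <= Dminus f x (b + w)%R - Dminus f x w)%E.
  by apply: ereal_inf_lbound; exists w.
apply: (le_trans (leeD DMa DMb)).
by rewrite addeA subeK ?addrA //; case: (DMdiff (b + w)).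
Qed.

Lemma DMminus_natmulD v u n :
  (DMminus f x v *+ n + DMminus f x u <= DMminus f x (v *+ n + u)%R)%E.
Proof.
have [_ DMv_fin] := DMdiff v; rewrite -(fineK DMv_fin) -EFin_natmul.
elim: n => [|n IHn]; first by rewrite !mulr0n !add0r.
rewrite !mulrS EFinD -addeA -addrA.
apply: le_trans (DMminus_superadditive _ _).
by apply: leeD; rewrite ?fineK.
Qed.

End LowerDiniDerivative.

Lemma solution_P1_no_ascent_direction (R : realType) (E : topologicalLmodType R)
    (Omega : set E) (m l : nat) (f : nat -> E -> R) (xh u : E) :
  open Omega -> is_solution_P1 Omega m f xh ->
  (forall j, (1 <= j <= m)%N -> 0 < f j xh -> lsc_at (f j) xh) ->
  (forall i, (l < i <= m)%N -> f i xh != 0) ->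
  ~ (forall i, (i <= l)%N -> (0 < Dminus (f i) xh u)%E).
Proof.
move=> oOmega [xh_in_Omega [feas_xh opt_xh]] lsc_f inactive_f ascent_u.
have near_feasible : \forall t \near 0^'+, forall i, (i <= m)%N ->
    (1 <= i)%N -> 0 <= f i (xh + t *: u).
  apply: near_forall_leq => i le_im; have [le_il|lt_li] := leqP i l.
    apply: filterS (Dminus_gt0_near _ (ascent_u i le_il)) => t lt_f i_ge1.
    by rewrite (le_trans _ (ltW lt_f)) // feas_xh ?i_ge1.
  have i_ge1 : (1 <= i <= m)%N by rewrite le_im andbT (leq_ltn_trans _ lt_li).
  have f_gt0 : 0 < f i xh by rewrite lt_neqAle eq_sym inactive_f ?lt_li ?feas_xh.
  have := lsc_f i i_ge1 f_gt0 _ f_gt0; rewrite subrr => /(near_line_right _ u).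
  by apply: filterS => t /ltW.
have near_Omega : \forall t \near 0^'+, Omega (xh + t *: u).
  by apply: near_line_right; rewrite openE in oOmega; exact: oOmega.
have near_better := Dminus_gt0_near _ (ascent_u 0%N (leq0n l)).
have [t [[feas_t xtu_in_Omega] better_t]] :=
  filter_ex (filterI (filterI near_feasible near_Omega) near_better).
have feas_xtu : forall i, (1 <= i <= m)%N -> 0 <= f i (xh + t *: u).
  by move=> i /andP[i_ge1 le_im]; exact: feas_t.
by have := opt_xh _ xtu_in_Omega feas_xtu; rewrite leNgt better_t.
Qed.

Lemma exists_Aset_natmulD {R : realType} {E : topologicalLmodType R}
    {f : nat -> E -> R} {xh : E} {l j : nat} {u v : E} :
  (j <= l)%N -> (forall i, (j <= i <= l)%N -> DM_differentiable (f i) xh) ->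
  Aset f xh l j.+1 u ->
  (forall i, (j < i <= l)%N -> (0 <= DMminus (f i) xh v)%E) ->
  (0 < DMminus (f j) xh v)%E ->
  exists n, Aset f xh l j (v *+ n + u).
Proof.
move=> le_jl DMdiff_f Au v_ge0 v_gt0.
have DMdiff_j : DM_differentiable (f j) xh by apply: DMdiff_f; rewrite leqnn.
have [[_ DMvj] [_ DMuj]] := conj (DMdiff_j v) (DMdiff_j u).
have [n DMj_gt0] : exists n,
    0 < fine (DMminus (f j) xh v) *+ n + fine (DMminus (f j) xh u).
  by apply: exists_natmulD_gt0; rewrite -lte_fin fineK.
exists n => i /andP[le_ji le_il].
have DMdiff_i : DM_differentiable (f i) xh by apply: DMdiff_f; rewrite le_ji.
apply: lt_le_trans (DMminus_natmulD DMdiff_i v u n).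
move: le_ji; rewrite leq_eqVlt => /orP[/eqP <-|lt_ji].
  by rewrite -(fineK DMvj) -(fineK DMuj) -EFin_natmul -EFinD lte_fin.
apply: lte_paddl; last by apply: Au; rewrite lt_ji.
have [_ DMvi] := DMdiff_i v.
by rewrite -(fineK DMvi) -EFin_natmul lee_fin mulrn_wge0 // -lee_fin fineK ?v_ge0 ?lt_ji.
Qed.

Theorem lemma3p8 (R : realType) (E : topologicalLmodType R) (Omega : set E)
  (m l k : nat) (f : nat -> E -> R) (xh : E) :
  Omega !=set0 -> open Omega ->
  is_solution_P1 Omega m f xh ->
  (forall j, (1 <= j <= m)%N -> 0 < f j xh -> lsc_at (f j) xh) ->
  (forall i, (i <= m)%N -> DM_differentiable (f i) xh) ->
  (1 <= l <= m)%N ->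
  (forall i, (1 <= i <= m)%N -> (f i xh = 0 <-> (i <= l)%N)) ->
  Aset f xh l l !=set0 ->
  (* k = min { i in {0,...,l} | A_i <> empty } *)
  (k <= l)%N -> Aset f xh l k !=set0 ->
  (forall i, (i < k)%N -> Aset f xh l i = set0) ->
  (1 <= k)%N /\
  forall v : E, (forall i, (k <= i <= l)%N -> (0 <= DMminus (f i) xh v)%E) ->
    (DMminus (f k.-1) xh v <= 0)%E.
Proof.
move=> _ oOmega solP1 lsc_f DMdiff_f /andP[_ le_lm] active_f _ le_kl [u Ak_u].
move=> Aset_lt_k.
have k_gt0 : (0 < k)%N.
  rewrite lt0n; apply/eqP => k0; rewrite {}k0 in Ak_u.
  apply: (@solution_P1_no_ascent_direction _ _ _ _ l _ _ u oOmega solP1 lsc_f).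
    move=> i /andP[lt_li le_im].
    have i_ge1 : (1 <= i <= m)%N by rewrite le_im andbT (leq_ltn_trans _ lt_li).
    by apply/eqP => /(active_f i i_ge1); rewrite leqNgt lt_li.
  by move=> i le_il; apply: lt_le_trans (DMminus_le_Dminus _); apply: Ak_u.
split=> // v v_ge0; rewrite leNgt; apply/negP => v_gt0.
have DMdiff_le_l i : (k.-1 <= i <= l)%N -> DM_differentiable (f i) xh.
  by case/andP=> _ le_il; apply: DMdiff_f; exact: leq_trans le_lm.
have le_k1l : (k.-1 <= l)%N by rewrite (leq_trans (leq_pred k)).
have Ak1_u : Aset f xh l k.-1.+1 u by rewrite prednK.
have v_ge0S : forall i, (k.-1 < i <= l)%N -> (0 <= DMminus (f i) xh v)%E.
  by rewrite prednK.
have [n] := exists_Aset_natmulD le_k1l DMdiff_le_l Ak1_u v_ge0S v_gt0.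
by rewrite Aset_lt_k ?prednK.
Qed.
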